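(* Let $(\mathcal A,\jmath)_K$ be a $\mathrm{C}^*$-net bundle and let $(F;\tilde o,o)$ be a $1$-simplex in the domain of its Čech cocycle, i.e. there is a ${}^*$-isomorphism $\zeta^F_{\tilde oo}:\mathcal A^F_o\to\mathcal A^F_{\tilde o}$ with $\zeta^F_{\tilde oo}\circ\jmath_{oa}=\jmath_{\tilde oa}$ for all $a\in F$. Then $\zeta^F_{\tilde oo}=\jmath_{\tilde oa}\circ\jmath_{ao}$ for all $a\in F$, and $\jmath_{a_2o}\circ\jmath_{oa_1}=\jmath_{a_2\tilde o}\circ\jmath_{\tilde oa_1}$ for all $a_1,a_2\in F$.
   Context: A $\mathrm{C}^*$-net bundle $(\mathcal A,\jmath)_K$ over a poset $K$: unital $\mathrm{C}^*$-algebras $\mathcal A_o$ and ${}^*$-isomorphisms $\jmath_{oa}:\mathcal A_a\to\mathcal A_o$ ($a\le o$) with $\jmath_{oa}\circ\jmath_{ae}=\jmath_{oe}$; for $a\le o$ one writes $\jmath_{ao}:=\jmath_{oa}^{-1}$. For nonempty $F\subseteq K$ and $o,\tilde o\in K$, $(F;\tilde o,o)$ is a $1$-simplex of $\Sigma^\circ_*(K)$ when every element of $F$ is $\le o$ and $\le\tilde o$. $\mathcal A^F_o$ is the $\mathrm{C}^*$-subalgebra of $\mathcal A_o$ generated by the $\jmath_{oa}(\mathcal A_a)$, $a\in F$ (for a net bundle it equals $\mathcal A_o$). The domain of the Čech cocycle is the largest symmetric subsimplicial set of $\Sigma^\circ_*(K)$ on whose $1$-simplices $(F;\tilde o,o)$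 such isomorphisms $\zeta^F_{\tilde oo}$ exist. *)

From HB Require Import structures.
From mathcomp Require Import all_boot all_order all_algebra.
From mathcomp Require Import complex.
From mathcomp Require Import all_classical all_reals all_analysis.
Set Implicit Arguments. Unset Strict Implicit. Unset Printing Implicit Defensive.
Import Order.TTheory GRing.Theory Num.Theory ComplexField.
Local Open Scope ring_scope.
Local Open Scope classical_set_scope.

Record unital_Cstar (R : realType) := UnitalCstar {
  cs_car :> completeNormedModType R[i];
  cs_mul : cs_car -> cs_car -> cs_car;
  cs_one : cs_car;
  cs_star : cs_car -> cs_car;
  cs_mulA : forall x y z, cs_mul x (cs_mul y z) = cs_mul (cs_mul x y) z;
  cs_mul1l : forall x, cs_mul cs_one x = x;
  cs_mul1r : forall x, cs_mul x cs_one = x;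
  cs_mulDl : forall x y z, cs_mul (x + y) z = cs_mul x z + cs_mul y z;
  cs_mulDr : forall x y z, cs_mul x (y + z) = cs_mul x y + cs_mul x z;
  cs_mulZl : forall (k : R[i]) x y, cs_mul (k *: x) y = k *: cs_mul x y;
  cs_mulZr : forall (k : R[i]) x y, cs_mul x (k *: y) = k *: cs_mul x y;
  cs_starK : forall x, cs_star (cs_star x) = x;
  cs_starD : forall x y, cs_star (x + y) = cs_star x + cs_star y;
  cs_starZ : forall (k : R[i]) x, cs_star (k *: x) = (Num.conj k) *: cs_star x;
  cs_starM : forall x y, cs_star (cs_mul x y) = cs_mul (cs_star y) (cs_star x);
  cs_normM : forall x y, `|cs_mul x y| <= `|x| * `|y|;
  cs_Cstar : forall x, `|cs_mul (cs_star x) x| = `|x| ^+ 2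
}.

Definition star_hom (R : realType) (A B : unital_Cstar R) (f : A -> B) : Prop :=
  [/\ forall x y, f (x + y) = f x + f y,
      forall (k : R[i]) x, f (k *: x) = k *: f x,
      forall x y, f (cs_mul x y) = cs_mul (f x) (f y),
      f (cs_one A) = cs_one B &
      forall x, f (cs_star x) = cs_star (f x)].

Definition star_iso (R : realType) (A B : unital_Cstar R) (f : A -> B) : Prop :=
  star_hom f /\ bijective f.

Definition Cstar_net_bundle (R : realType) (d : Order.disp_t) (K : porderType d)
  (A : K -> unital_Cstar R)
  (j : forall o a : K, (a <= o)%O -> A a -> A o) : Prop :=
  (forall o a (h : (a <= o)%O), star_iso (j o a h)) /\
  (forall o a e (h1 : (a <= o)%O) (h2 : (e <= a)%O) (h3 : (e <= o)%O),
      j o a h1 \o j a e h2 = j o e h3).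

(* j_{ao} := j_{oa}^{-1} (the inverse map, chosen classically; it is the
   genuine inverse whenever j_{oa} is bijective) *)
Definition jrev (R : realType) (d : Order.disp_t) (K : porderType d)
  (A : K -> unital_Cstar R)
  (j : forall o a : K, (a <= o)%O -> A a -> A o)
  (o a : K) (h : (a <= o)%O) : A o -> A a :=
  fun y => xget 0 [set x | j o a h x = y].

(* Every j_{oa} is bijective, so the intertwining relation zeta \o j_{oa} = j_{ota}
   determines zeta on all of A_o: zeta = j_{ota} \o j_{ao}.  Writing zeta this
   way for a2 and evaluating it at j_{oa1} x, which zeta sends to j_{ota1} x,
   gives j_{ota2} (j_{a2o} (j_{oa1} x)) = j_{ota1} x; applying j_{a2ot} yields
   the second identity. *)

From HB Require Import structures.
From mathcomp Require Import all_boot all_order all_algebra.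
From mathcomp Require Import complex.
From mathcomp Require Import all_classical all_reals all_analysis.
Import Order.TTheory GRing.Theory Num.Theory ComplexField.
Local Open Scope classical_set_scope.

Section InverseEmbedding.
Variables (R : realType) (d : Order.disp_t) (K : porderType d).
Variables (A : K -> unital_Cstar R) (j : forall o a : K, (a <= o)%O -> A a -> A o).

Lemma net_bundle_bijective : Cstar_net_bundle j ->
  forall o a (h : (a <= o)%O), bijective (j o a h).
Proof. by move=> [iso _] o a h; case: (iso o a h). Qed.

Lemma jrevK o a (h : (a <= o)%O) :
  bijective (j o a h) -> cancel (jrev j h) (j o a h).
Proof.
move=> [g jg gj] y; have ex : exists x, [set x | j o a h x = y] x.
  by exists (g y); rewrite /= gj.
exact: (xgetPex 0%R ex).
Qed.

Lemma jK o a (h : (a <= o)%O) :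
  bijective (j o a h) -> cancel (j o a h) (jrev j h).
Proof. by move=> jbij x; apply: (bij_inj jbij); rewrite jrevK. Qed.

End InverseEmbedding.

Arguments net_bundle_bijective {R d K A j}.

Lemma comp_eq_cancel (T U V : Type) (zeta : U -> V) (f : T -> U) (f' : U -> T)
    (g : T -> V) :
  cancel f' f -> zeta \o f = g -> zeta = g \o f'.
Proof. by move=> f'K <-; apply: funext => y /=; rewrite f'K. Qed.

Theorem lemma5p5 (R : realType) (d : Order.disp_t) (K : porderType d)
  (A : K -> unital_Cstar R)
  (j : forall o a : K, (a <= o)%O -> A a -> A o)
  (hnet : Cstar_net_bundle j)
  (F : set K) (o ot : K)
  (hF0 : F !=set0)
  (hF : forall a, F a -> (a <= o)%O /\ (a <= ot)%O)
  (zeta : A o -> A ot)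
  (hzeta : star_iso zeta)
  (hzj : forall a (h1 : (a <= o)%O) (h2 : (a <= ot)%O),
           F a -> zeta \o j o a h1 = j ot a h2) :
  (forall a (h1 : (a <= o)%O) (h2 : (a <= ot)%O),
     F a -> zeta = j ot a h2 \o jrev j h1) /\
  (forall a1 a2 (h1 : (a1 <= o)%O) (h2 : (a2 <= o)%O)
          (h1' : (a1 <= ot)%O) (h2' : (a2 <= ot)%O),
     F a1 -> F a2 ->
     jrev j h2 \o j o a1 h1 = jrev j h2' \o j ot a1 h1').
Proof.
have jbij := net_bundle_bijective hnet.
have zetaE a (h1 : (a <= o)%O) (h2 : (a <= ot)%O) :
    F a -> zeta = j ot a h2 \o jrev j h1.
  by move=> Fa; apply: comp_eq_cancel (hzj a h1 h2 Fa); apply: jrevK.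
split=> // a1 a2 h1 h2 h1' h2' Fa1 Fa2; apply: funext => x /=.
rewrite -(hzj a1 h1 h1' Fa1) /= (zetaE a2 h2 h2' Fa2) /=.
by rewrite jK.
Qed.
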